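(* Let $n\ge1$, $\varepsilon\in D$, $s\in D^n$, and let $\mu^{(n)}$, $e_n$ and $n'$ be as in the recursive construction below. If $g\in D[x]$ is zero or satisfies $\deg g\le -e_n$, then $\mu^{(n)}+g\,\mu^{(n')}\in\mathrm{Min}(s)$. In particular, if $e_n\le 0$ then $s$ has more than one minimal polynomial, i.e. $|\mathrm{Min}(s)|>1$.
   Context: Let $D$ be a commutative integral domain with $1\neq 0$. For $s=(s_1,\dots,s_n)\in D^n$ put $\underline{s}=s_1x^{-1}+\cdots+s_nx^{-n}\in D[x,x^{-1}]$; for a Laurent polynomial $F$, $F_k$ is the coefficient of $x^k$; $s^{(i)}=(s_1,\dots,s_i)$. A polynomial $f\in D[x]$ is an annihilator of $s$ if $f=0$, or $d=\deg f\ge0$ and $(f\cdot\underline{s})_{d-j}=0$ for $d+1\le j\le n$. $\mathrm{Min}(s)$ is the set of nonzero annihilators of least degree. For nonzero $f\in D[x]$ and $t\in D^m$, $\Delta(f,t)=(f\cdot\underline{t})_{\deg f-m}$. Recursive construction (relative to a fixed $\varepsilon\in D$): put $\mu^{(-1)}=\varepsilon$, $\mu^{(0)}=1$, $\Delta_0=1$, $0'=-1$, and for $j\ge 0$ let $e_j=j+1-2\deg\mu^{(j)}$ (so $e_0=1$). For $j=1,\dots,n$ successively define: $\Delta_j=\Delta(\mu^{(j-1)},s^{(j)})$; the index $j'=(j-1)'$ if $\Delta_j=0$ or $e_{j-1}\le 0$, and $j'=j-1$ if $\Delta_j\neq0$ and $e_{j-1}>0$; $\Delta'_j=\Delta_{(j-1)'+1}$;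 and $\mu^{(j)}=\mu^{(j-1)}$ if $\Delta_j=0$, otherwise $\mu^{(j)}=\Delta'_j\,x^{\max\{e_{j-1},0\}}\mu^{(j-1)}-\Delta_j\,x^{\max\{-e_{j-1},0\}}\mu^{((j-1)')}$. *)

From HB Require Import structures.
From mathcomp Require Import all_boot all_order all_algebra.
Set Implicit Arguments. Unset Strict Implicit. Unset Printing Implicit Defensive.
Import Order.TTheory GRing.Theory Num.Theory.
Local Open Scope ring_scope.

Section BM.
Variable D : idomainType.

(* A sequence s = (s_1,...,s_n) in D^n is represented by s : seq D with
   s`_(i-1) = s_i. *)

(* degree of a polynomial (only used for nonzero polynomials; deg 0 = 0) *)
Definition pdeg (f : {poly D}) : nat := (size f).-1.

(* coefficient of x^k (k : int) in the Laurent polynomial f * s_underline,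
   where s_underline = s_1 x^-1 + ... + s_n x^-n.
   (f * s)_k = \sum_{i=1}^n f_{k+i} s_i, with f_m = 0 for m < 0. *)
Definition lcoef (f : {poly D}) (s : seq D) (k : int) : D :=
  \sum_(i < size s)
     (if (0 <= k + (i.+1)%:Z)%R then f`_(absz (k + (i.+1)%:Z)) else 0) * s`_i.

Definition annihilator (s : seq D) (f : {poly D}) : Prop :=
  f = 0 \/
  (forall j : nat, (pdeg f < j)%N -> (j <= size s)%N ->
     lcoef f s ((pdeg f)%:Z - j%:Z) = 0).

Definition in_Min (s : seq D) (f : {poly D}) : Prop :=
  f != 0 /\ annihilator s f /\
  (forall g : {poly D}, g != 0 -> annihilator s g -> (pdeg f <= pdeg g)%N).

Definition Delta (f : {poly D}) (t : seq D) : D :=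
  lcoef f t ((pdeg f)%:Z - (size t)%:Z).

(* State of the recursive construction after step j:
   mu = mu^(j), mup = mu^(j'), jp = j', dp = Delta_{j'+1}. *)
Record bmstate := BMState {
  st_mu : {poly D};
  st_mup : {poly D};
  st_jp : int;
  st_dp : D }.

Definition e_of (j : nat) (mu : {poly D}) : int :=
  j%:Z + 1 - 2%:Z * (pdeg mu)%:Z.

Definition bmstep (s : seq D) (j : nat) (st : bmstate) : bmstate :=
  let mu := st_mu st in
  let Dj := Delta mu (take j s) in
  let e := e_of j.-1 mu in
  if Dj == 0 then st
  else if (0 < e)%R then
    BMState (st_dp st *: ('X^(absz e) * mu) - Dj *: st_mup st)
            mu (j.-1)%:Z Dj
  else
    BMState (st_dp st *: mu - Dj *: ('X^(absz e) * st_mup st))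
            (st_mup st) (st_jp st) (st_dp st).

(* state after step j; initial: mu^(0) = 1, 0' = -1, mu^(-1) = eps,
   Delta_{0'+1} = Delta_0 = 1 *)
Fixpoint bmstate_at (eps : D) (s : seq D) (j : nat) : bmstate :=
  match j with
  | 0 => BMState 1 eps%:P (-1) 1
  | j'.+1 => bmstep s j'.+1 (bmstate_at eps s j')
  end.

Definition mu (eps : D) (s : seq D) (j : nat) : {poly D} :=
  st_mu (bmstate_at eps s j).
Definition mu_prime (eps : D) (s : seq D) (j : nat) : {poly D} :=
  st_mup (bmstate_at eps s j).
Definition e (eps : D) (s : seq D) (j : nat) : int :=
  e_of j (mu eps s j).

End BM.

From mathcomp Require Import all_boot all_order all_algebra.
From mathcomp Require Import zify.
Import Order.TTheory GRing.Theory Num.Theory.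
Local Open Scope ring_scope.
Set Implicit Arguments. Unset Strict Implicit. Unset Printing Implicit Defensive.

(* Laurent coefficients of f * s are read off as coefficients of the polynomial
   f * (x^n s).  Massey's bound: if f annihilates s^(j-1) with nonzero
   discrepancy at step j, every nonzero annihilator g of s^(j) has
   deg f + deg g >= j, because the coefficient of f g (x^n s) at
   deg f + deg g + n - j is lc(g) Delta_j when computed through f (x^n s) and 0
   when computed through g (x^n s).  By induction along the construction,
   mu^(j) is a minimal annihilator of s^(j), and the coefficients of
   mu^(j') (x^n s) vanish beyond position n - deg mu^(j) and equal the nonzero
   Delta'_(j+1) there.  So for deg g <= -e_n = 2 deg mu^(n) - n - 1 the polynomial
   g mu^(n') has degree below deg mu^(n) and vanishes on the annihilation window
   of mu^(n), and mu^(n) + g mu^(n') is again minimal; for e_n <= 0 the choices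
   g = 0 and g = 1 differ because mu^(n') is nonzero. *)

Section Degree.
Variable D : idomainType.
Implicit Types p q : {poly D}.

Lemma size_pdeg p : p != 0 -> size p = (pdeg p).+1.
Proof. by move=> p_neq0; rewrite /pdeg prednK // size_poly_gt0. Qed.

Lemma size_le_pdeg p : (size p <= (pdeg p).+1)%N.
Proof. exact: leqSpred. Qed.

Lemma coef_gt_pdeg p i : (pdeg p < i)%N -> p`_i = 0.
Proof. by move=> lt_pi; rewrite nth_default // (leq_trans (size_le_pdeg _)). Qed.

Lemma pdegC (a : D) : pdeg a%:P = 0%N.
Proof. by rewrite /pdeg size_polyC; case: (a != 0). Qed.

Lemma pdegZ a p : a != 0 -> pdeg (a *: p) = pdeg p.
Proof. by move=> a_neq0; rewrite /pdeg size_scale. Qed.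

Lemma pdeg_XnM k p : p != 0 -> pdeg ('X^k * p) = (k + pdeg p)%N.
Proof. by move=> p_neq0; rewrite /pdeg mulrC size_mulXn // size_pdeg // addnS. Qed.

Lemma pdegDl p q : (size q < size p)%N -> pdeg (p + q) = pdeg p.
Proof. by move=> lt_qp; rewrite /pdeg size_polyDl. Qed.

Lemma polyDl_neq0 p q : (size q < size p)%N -> p + q != 0.
Proof.
by move=> lt_qp; rewrite -size_poly_eq0 size_polyDl // -lt0n (leq_ltn_trans _ lt_qp).
Qed.

End Degree.

Section Annihilators.
Variables (D : idomainType) (s : seq D).
Implicit Types f g p : {poly D}.
Local Notation n := (size s).

(* x^n times the Laurent polynomial s_1 x^-1 + ... + s_n x^-n. *)
Definition spoly : {poly D} := \sum_(i < n) s`_i *: 'X^(n.-1 - i).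

Definition scoef f (m : nat) : D := (f * spoly)`_m.

Lemma lcoef_scoef f m : lcoef f s (m%:Z - n%:Z) = scoef f m.
Proof.
rewrite /scoef /spoly mulr_sumr coef_sum; apply: eq_bigr => i _.
rewrite -scalerAr coefZ coefMXn mulrC.
have lt_in := ltn_ord i.
case: ifPn => [ge0|lt0]; case: ifPn => [ltm|gem] //.
- exfalso; lia.
- by congr (_ * _`_ _); lia.
- exfalso; lia.
Qed.

Lemma lcoef_take f j (k : int) : (j <= n)%N -> (pdeg f)%:Z <= k + j%:Z ->
  lcoef f (take j s) k = lcoef f s k.
Proof.
move=> le_jn deg_f; rewrite /lcoef size_takel //.
rewrite (big_ord_widen n (fun i => (if 0 <= k + i.+1%:Z then f`_(absz (k + i.+1%:Z)) else 0)
  * (take j s)`_i) le_jn) big_mkcond; apply: eq_bigr => i _.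
case: ifPn => [lt_ij|ge_ij]; first by rewrite nth_take.
case: ifPn => _; last by rewrite mul0r.
by rewrite coef_gt_pdeg ?mul0r //; lia.
Qed.

Lemma Delta_take f j : (j <= n)%N -> Delta f (take j s) = scoef f (pdeg f + n - j).
Proof.
move=> le_jn; rewrite /Delta size_takel // lcoef_take //; last by lia.
by rewrite -lcoef_scoef; congr lcoef; lia.
Qed.

Lemma scoef0 m : scoef 0 m = 0.
Proof. by rewrite /scoef mul0r coef0. Qed.

Lemma scoefD f g m : scoef (f + g) m = scoef f m + scoef g m.
Proof. by rewrite /scoef mulrDl coefD. Qed.

Lemma scoefB f g m : scoef (f - g) m = scoef f m - scoef g m.
Proof. by rewrite /scoef mulrBl coefB. Qed.

Lemma scoefZ a f m : scoef (a *: f) m = a * scoef f m.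
Proof. by rewrite /scoef -scalerAl coefZ. Qed.

Lemma scoefXnM k f m : scoef ('X^k * f) m = if (m < k)%N then 0 else scoef f (m - k).
Proof. by rewrite /scoef -mulrA coefXnM. Qed.

Lemma scoefM g f m : scoef (g * f) m = \sum_(c < m.+1) g`_c * scoef f (m - c).
Proof. by rewrite /scoef -mulrA coefM. Qed.

(* f annihilates s^(j): the coefficients involved only see s_1, ..., s_j. *)
Definition ann_prefix (j : nat) f : Prop :=
  forall m, (pdeg f + n - j <= m)%N -> (m < n)%N -> scoef f m = 0.

Lemma ann_prefixW j k f : (k <= j)%N -> ann_prefix j f -> ann_prefix k f.
Proof. by move=> le_kj ann m lo hi; apply: ann => //; lia. Qed.

Lemma annihilator_prefix f : annihilator s f <-> ann_prefix n f.
Proof.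
split=> [[->|ann] m lo hi|ann]; first exact: scoef0.
  have := ann (pdeg f + n - m)%N; rewrite -lcoef_scoef.
  have -> : (pdeg f)%:Z - (pdeg f + n - m)%N%:Z = m%:Z - n%:Z by lia.
  by apply; lia.
right=> j lo hi; have -> : (pdeg f)%:Z - j%:Z = (pdeg f + n - j)%N%:Z - n%:Z by lia.
by rewrite lcoef_scoef; apply: ann; lia.
Qed.

Lemma ann_prefix_pdeg_sum f g j : (j <= n)%N -> ann_prefix j.-1 f ->
  scoef f (pdeg f + n - j) != 0 -> g != 0 -> ann_prefix j g ->
  (j <= pdeg f + pdeg g)%N.
Proof.
move=> le_jn ann_f disc_f g_neq0 ann_g; rewrite leqNgt; apply/negP => short.
pose M := (pdeg f + pdeg g + n - j)%N.
have lt_gM : (pdeg g < M.+1)%N by lia.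
have via_f : scoef (g * f) M = lead_coef g * scoef f (pdeg f + n - j).
  rewrite scoefM (bigD1 (Ordinal lt_gM)) //= big1 ?addr0; last first.
    move=> c c_neq; case: (ltngtP c (pdeg g)) => [lt_cg|gt_cg|eq_cg].
    - by rewrite ann_f ?mulr0 //; lia.
    - by rewrite coef_gt_pdeg ?mul0r.
    - by rewrite -val_eqE /= eq_cg eqxx in c_neq.
  by rewrite lead_coefE; congr (_ * scoef _ _); lia.
have via_g : scoef (f * g) M = 0.
  rewrite scoefM big1 // => c _; case: (leqP c (pdeg f)) => [le_cf|gt_cf].
    by rewrite ann_g ?mulr0 //; lia.
  by rewrite coef_gt_pdeg ?mul0r.
move: via_f; rewrite mulrC via_g => /esym/eqP.
by rewrite mulf_eq0 lead_coef_eq0 (negbTE g_neq0) (negbTE disc_f).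
Qed.

End Annihilators.

Section BerlekampMassey.
Variables (D : idomainType) (s : seq D).
Local Notation n := (size s).

(* In BM terms deg mu^(j) = j' + 1 - deg mu^(j') when deg mu^(j) > 0, so the
   discrepancy Delta'_(j+1) of mu^(j') sits at index n - deg mu^(j); when
   deg mu^(j) = 0, mu^(j') may still be the arbitrary constant eps. *)
Record bm_invariant (j : nat) (st : bmstate D) : Prop := BMInvariant {
  bm_mu_neq0 : st_mu st != 0;
  bm_mu_ann : ann_prefix s j (st_mu st);
  bm_dp_neq0 : st_dp st != 0;
  bm_pdeg_sum : (pdeg (st_mup st) + pdeg (st_mu st) <= j)%N;
  bm_mup_ann : forall m, (n - pdeg (st_mu st) < m)%N -> (m < n)%N ->
    scoef s (st_mup st) m = 0;
  bm_mup_disc : (0 < pdeg (st_mu st))%N ->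
    scoef s (st_mup st) (n - pdeg (st_mu st)) = st_dp st;
  bm_mu_min : forall g, g != 0 -> ann_prefix s j g -> (pdeg (st_mu st) <= pdeg g)%N }.

Lemma bm_invariant0 eps : bm_invariant 0 (BMState 1 eps%:P (-1) 1).
Proof.
split=> //=; rewrite -?polyC1 ?pdegC ?polyC_eq0 ?oner_neq0 //.
- by move=> m; rewrite pdegC; lia.
- by move=> m; lia.
Qed.

Lemma bm_mup_neq0 j st : bm_invariant j st -> (0 < pdeg (st_mu st))%N -> st_mup st != 0.
Proof.
case=> _ _ dp_neq0 _ _ mup_disc _ /mup_disc disc.
by apply: contra_neq dp_neq0 => mup0; rewrite -disc mup0 scoef0.
Qed.

Section Step.
Variables (j : nat) (mu mup : {poly D}) (jp : int) (dp : D).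
Hypotheses (lt_jn : (j < n)%N) (inv : bm_invariant j (BMState mu mup jp dp)).
Local Notation L := (pdeg mu).
Local Notation delta := (scoef s mu (L + n - j.+1)).

Lemma bm_step_no_disc : delta = 0 -> bm_invariant j.+1 (BMState mu mup jp dp).
Proof.
case: inv => /= mu_neq0 mu_ann dp_neq0 pdeg_sum mup_ann mup_disc mu_min delta0.
split=> //= [m lo hi||g g_neq0 /(ann_prefixW (leqnSn j))]; last exact: mu_min.
  by have [<-//|neq_m] := eqVneq (L + n - j.+1)%N m; apply: mu_ann; lia.
by lia.
Qed.

Lemma bm_step_length_change : delta != 0 -> (2 * L < j.+1)%N ->
  bm_invariant j.+1
    (BMState (dp *: ('X^(j.+1 - 2 * L) * mu) - delta *: mup) mu j delta).
Proof.
case: inv => /= mu_neq0 mu_ann dp_neq0 pdeg_sum mup_ann mup_disc mu_min delta_neq0 e_gt0.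
set k := (j.+1 - 2 * L)%N.
have Xmu_neq0 : dp *: ('X^k * mu) != 0.
  by rewrite scale_poly_eq0 negb_or dp_neq0 /= mulf_neq0 // monic_neq0 // monicXn.
have pdeg_Xmu : pdeg (dp *: ('X^k * mu)) = (j.+1 - L)%N.
  by rewrite pdegZ // pdeg_XnM //; lia.
have small_mup : (size (- (delta *: mup)) < size (dp *: ('X^k * mu)))%N.
  rewrite size_polyN size_pdeg // pdeg_Xmu ltnS.
  by rewrite (leq_trans (size_scale_leq _ _)) // (leq_trans (size_le_pdeg _)) //; lia.
have pdeg_new : pdeg (dp *: ('X^k * mu) - delta *: mup) = (j.+1 - L)%N.
  by rewrite pdegDl.
split=> /=; rewrite ?pdeg_new ?polyDl_neq0 //.
- move=> m; rewrite pdeg_new => lo hi.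
  rewrite scoefB !scoefZ scoefXnM ifF; last by lia.
  have [lt_m|ge_m] := ltnP (n - L) m.
    by rewrite mu_ann ?mup_ann ?mulr0 ?subrr //; lia.
  have -> : m = (n - L)%N by lia.
  rewrite mup_disc; last by lia.
  have -> : (n - L - k = L + n - j.+1)%N by lia.
  by rewrite mulrC subrr.
- by lia.
- by move=> m lo hi; apply: mu_ann; lia.
- by have -> : (n - (j.+1 - L) = L + n - j.+1)%N by lia.
- move=> g g_neq0 ann_g.
  by have := ann_prefix_pdeg_sum lt_jn mu_ann delta_neq0 g_neq0 ann_g; lia.
Qed.

Lemma bm_step_same_length : delta != 0 -> (j.+1 <= 2 * L)%N ->
  bm_invariant j.+1
    (BMState (dp *: mu - delta *: ('X^(2 * L - j.+1) * mup)) mup jp dp).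
Proof.
case: inv => /= mu_neq0 mu_ann dp_neq0 pdeg_sum mup_ann mup_disc mu_min delta_neq0 e_le0.
set k := (2 * L - j.+1)%N.
have dpmu_neq0 : dp *: mu != 0 by rewrite scale_poly_eq0 negb_or dp_neq0.
have small_Xmup : (size (- (delta *: ('X^k * mup))) < size (dp *: mu))%N.
  rewrite size_polyN size_pdeg // pdegZ // ltnS (leq_trans (size_scale_leq _ _)) //.
  rewrite (leq_trans (size_polyMleq _ _)) // size_polyXn addSn /=.
  by rewrite (leq_trans (leq_add (leqnn k) (size_le_pdeg mup))) //; lia.
have pdeg_new : pdeg (dp *: mu - delta *: ('X^k * mup)) = L by rewrite pdegDl // pdegZ.
split=> /=; rewrite ?pdeg_new ?polyDl_neq0 //.
- move=> m; rewrite pdeg_new => lo hi.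
  rewrite scoefB !scoefZ scoefXnM ifF; last by lia.
  have [lt_m|ge_m] := ltnP (L + n - j.+1) m.
    by rewrite mu_ann ?mup_ann ?mulr0 ?subrr //; lia.
  have -> : m = (L + n - j.+1)%N by lia.
  have -> : (L + n - j.+1 - k = n - L)%N by lia.
  by rewrite mup_disc; [rewrite mulrC subrr | lia].
- by lia.
- by move=> g g_neq0 /(ann_prefixW (leqnSn j)); apply: mu_min.
Qed.

End Step.

Lemma bm_invariant_step j st : (j < n)%N -> bm_invariant j st ->
  bm_invariant j.+1 (bmstep s j.+1 st).
Proof.
case: st => mu mup jp dp lt_jn inv; rewrite /bmstep /= Delta_take //.
have [delta0|delta_neq0] := eqVneq (scoef s mu (pdeg mu + n - j.+1)) 0.
  exact: bm_step_no_disc.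
have e_val : e_of j mu = j.+1%:Z - (2 * pdeg mu)%N%:Z by rewrite /e_of; lia.
rewrite e_val subr_gt0 ltz_nat.
have [e_gt0|e_le0] := ltnP (2 * pdeg mu) j.+1.
  by rewrite distnEl 1?ltnW //; apply: (bm_step_length_change lt_jn inv).
by rewrite distnEr //; apply: (bm_step_same_length lt_jn inv).
Qed.

Lemma bm_invariant_at eps j : (j <= n)%N -> bm_invariant j (bmstate_at eps s j).
Proof.
elim: j => [|j IHj] le_jn; first exact: bm_invariant0.
by apply: bm_invariant_step => //; apply: IHj; apply: ltnW.
Qed.

Lemma bm_in_Min st (g : {poly D}) : bm_invariant n st ->
  g = 0 \/ (pdeg g + n < 2 * pdeg (st_mu st))%N ->
  in_Min s (st_mu st + g * st_mup st).
Proof.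
case: st => mu mup jp dp [/= mu_neq0 mu_ann _ pdeg_sum mup_ann _ mu_min] small_g.
have small_gmup : (size (g * mup)%R < size mu)%N.
  rewrite (size_pdeg mu_neq0); case: small_g => [->|g_small]; first by rewrite mul0r size_poly0.
  rewrite ltnS (leq_trans (size_polyMleq _ _)) //.
  by have := leq_add (size_le_pdeg g) (size_le_pdeg mup); lia.
have gmup_ann m : (pdeg mu <= m)%N -> (m < n)%N -> scoef s (g * mup) m = 0.
  move=> lo hi; case: small_g => [->|g_small]; first by rewrite mul0r scoef0.
  rewrite scoefM big1 // => c _; have [le_cg|gt_cg] := leqP c (pdeg g).
    by rewrite mup_ann ?mulr0 //; lia.
  by rewrite coef_gt_pdeg ?mul0r.
split; first exact: polyDl_neq0.
split=> [|f f_neq0 /annihilator_prefix ann_f]; last by rewrite pdegDl // mu_min.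
apply/annihilator_prefix => m; rewrite pdegDl // => lo hi.
by rewrite scoefD mu_ann ?gmup_ann ?add0r //; lia.
Qed.

End BerlekampMassey.

Theorem mainTheorem7 (D : idomainType) (n : nat) (eps : D) (s : seq D) :
  (1 <= n)%N -> size s = n ->
  (forall g : {poly D}, (g = 0 \/ ((pdeg g)%:Z <= - e eps s n)) ->
     in_Min s (mu eps s n + g * mu_prime eps s n)) /\
  (e eps s n <= 0 ->
     exists f1 f2 : {poly D}, in_Min s f1 /\ in_Min s f2 /\ f1 != f2).
Proof.
move=> n_gt0 <-; rewrite /e /mu /mu_prime /e_of.
have inv := bm_invariant_at eps (leqnn (size s)).
set st := bmstate_at eps s (size s) in inv *.
split=> [g small_g|e_le0].
  by apply: bm_in_Min inv _; case: small_g => [->|?]; [left|right; lia].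
have L_gt0 : (0 < pdeg (st_mu st))%N by lia.
exists (st_mu st + 0 * st_mup st), (st_mu st + 1 * st_mup st).
split; first by apply: bm_in_Min inv _; left.
split; first by apply: bm_in_Min inv _; right; rewrite -polyC1 pdegC; lia.
by rewrite mul0r mul1r addr0 -subr_eq0 opprD addNKr oppr_eq0 (bm_mup_neq0 inv).
Qed.
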